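(* Let $G$ and $H$ be connected graphs. Then $$dim_s(G\square H)\ge \mu(H_{SR})\,dim_s(G\square K_2)\ge 2\,\mu(G_{SR})\,\mu(H_{SR}).$$
   Context: Graphs are finite, simple, undirected; for connected $G$, $d_G$ is the shortest-path distance and $I_G[u,v]$ is the set of vertices lying on some shortest $u$–$v$ path. A vertex $w$ strongly resolves vertices $u,v$ if $v\in I_G[u,w]$ or $u\in I_G[v,w]$. A strong resolving set of $G$ is a set $S\subseteq V(G)$ such that every pair of vertices is strongly resolved by some vertex of $S$; $dim_s(G)$ is the minimum cardinality of such a set. A vertex $u$ is maximally distant from $v$ if $d_G(v,w)\le d_G(u,v)$ for every neighbor $w$ of $u$; distinct $u,v$ are mutually maximally distant if each is maximally distant from the other. The boundary $\partial(G)$ is the set of vertices mutually maximally distant with some vertex. The strong resolving graph $G_{SR}$ has vertex set $\partial(G)$, two vertices adjacent iff they are mutually maximally distant in $G$. $\mu(F)$ is the matching number (maximum size of a matching) of $F$. $K_2$ is the complete graph on two vertices. $G\square H$ denotes the Cartesian product: vertex set $V(G)\times V(H)$, $(a,b)\sim(c,d)$ iff ($a=c$ and $bd\in E(H)$) or ($b=d$ and $ac\in E(G)$). *)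

From mathcomp Require Import all_boot.
Set Implicit Arguments. Unset Strict Implicit. Unset Printing Implicit Defensive.

Section Graphs.
Variable T : finType.
Variable e : rel T.

Definition simple_graph : Prop := symmetric e /\ irreflexive e.

Definition connected_graph : Prop := forall u v : T, connect e u v.

Definition walk_len (n : nat) (u v : T) : bool :=
  [exists p : n.-tuple T, path e u p && (last u p == v)].

(* shortest-path distance: least n with a u-v walk of length n
   (for connected graphs it is < #|T|) *)
Definition dist (u v : T) : nat :=
  find (fun n => walk_len n u v) (iota 0 #|T|).

Definition in_interval (u v x : T) : bool := dist u x + dist x v == dist u v.

Definition strongly_resolves (w u v : T) : bool :=
  in_interval u w v || in_interval v w u.

Definition strong_resolving_set (S : {set T}) : bool :=
  [forall u, forall v, (u != v) ==> [exists w in S, strongly_resolves w u v]].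

Definition sdim : nat :=
  \big[minn/#|T|]_(S : {set T} | strong_resolving_set S) #|S|.

Definition max_distant (u v : T) : bool :=
  [forall w, e u w ==> (dist v w <= dist u v)].

Definition mutually_max_distant (u v : T) : bool :=
  (u != v) && max_distant u v && max_distant v u.

Definition boundary : {set T} :=
  [set u | [exists v, mutually_max_distant u v]].

Definition SRV : finType := {x : T | x \in boundary}.
Definition sr_rel : rel SRV :=
  fun x y => mutually_max_distant (val x) (val y).

End Graphs.

Section Matching.
Variable V : finType.
Variable r : rel V.

Definition is_matching (M : {set {set V}}) : bool :=
  [forall E in M, [exists x, exists y, r x y && (E == [set x; y])]]
  && trivIset M.

Definition matching_number : nat :=
  \max_(M : {set {set V}} | is_matching M) #|M|.
End Matching.

Definition mu_SR (T : finType) (e : rel T) : nat :=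
  matching_number (@sr_rel T e).

Definition cart_rel (T U : finType) (e : rel T) (f : rel U) : rel (T * U) :=
  fun a b => ((a.1 == b.1) && f a.2 b.2) || ((a.2 == b.2) && e a.1 b.1).

Definition K2_rel : rel bool := fun x y => x != y.

From mathcomp Require Import all_boot zify.
Set Implicit Arguments. Unset Strict Implicit. Unset Printing Implicit Defensive.

(* A vertex set is strongly resolving iff it contains an endpoint of every pair
   of mutually maximally distant vertices, i.e. iff it is a vertex cover of the
   strong resolving graph.  In G □ H the vertices (a, x) and (c, y) are mutually
   maximally distant as soon as a, c are maximally distant from each other and
   x y is an edge of H_SR.  So for each edge {x, y} of a maximum matching of
   H_SR, the part of a strong resolving set of G □ H lying over {x, y} folds,
   via (a, x) |-> (a, 0) and (a, y) |-> (a, 1), onto a strong resolving set of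
   G □ K2; parts over different edges are disjoint.  Similarly, over an edge
   {a, c} of a matching of G_SR, a strong resolving set of G □ K2 must meet both
   of the disjoint pairs {(a, 0), (c, 1)} and {(c, 0), (a, 1)}. *)

Inductive walk (T : Type) (e : rel T) : nat -> T -> T -> Prop :=
| walk0 u : walk e 0 u u
| walkS n u w v : e u w -> walk e n w v -> walk e n.+1 u v.

Section Distance.
Variables (T : finType) (e : rel T).
Hypothesis se : symmetric e.

Lemma walk_lenP n u v : reflect (walk e n u v) (walk_len e n u v).
Proof.
apply: (iffP existsP).
  case=> p /andP[]; elim: n u p => [|n IH] u p.
    by rewrite tuple0 => _ /= /eqP->; apply: walk0.
  case: p => [[|w s] //= Hs] /andP[euw ps] lv.
  exact: walkS euw (IH w (Tuple (Hs : size s == n)) ps lv).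
elim=> [x|m x w y exw _ [p /andP[pp /eqP lp]]]; first by exists [tuple]; rewrite /=.
by exists [tuple of w :: p]; rewrite /= exw pp lp eqxx.
Qed.

Lemma walk_cat n m u v w : walk e n u v -> walk e m v w -> walk e (n + m) u w.
Proof. by elim=> // k x y z exy _ IH /IH; apply: walkS. Qed.

Lemma walk_rcons n u v w : walk e n u v -> e v w -> walk e n.+1 u w.
Proof. by move=> uv vw; rewrite -addn1; apply: walk_cat uv (walkS vw (walk0 _ _)). Qed.

Lemma walk_rev n u v : walk e n u v -> walk e n v u.
Proof.
elim=> [x|k x y z exy _ IH]; first exact: walk0.
by apply: walk_rcons IH _; rewrite se.
Qed.

Lemma walk_connect n u v : walk e n u v -> connect e u v.
Proof.
elim=> [x|k x y z exy _]; first exact: connect0.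
exact/connect_trans/connect1.
Qed.

Lemma path_walk u p : path e u p -> walk e (size p) u (last u p).
Proof.
elim: p u => [|w p IH] u /=; first by move=> _; apply: walk0.
by case/andP=> euw /IH; apply: walkS.
Qed.

Lemma connect_walk u v : connect e u v -> exists2 n, n < #|T| & walk e n u v.
Proof.
case/connectP=> p pp ->; case: (shortenP pp) => p' pp' up' _.
exists (size p'); last exact: path_walk.
by have := max_card (mem (u :: p')); rewrite (card_uniqP up').
Qed.

Lemma dist_le_walk n u v : walk e n u v -> dist e u v <= n.
Proof.
move=> uv; have [n_lt|n_ge] := ltnP n #|T|; last first.
  by rewrite (leq_trans (find_size _ _)) ?size_iota.
rewrite leqNgt; apply/negP => /(before_find 0).
by rewrite nth_iota // add0n => /walk_lenP.
Qed.

Lemma distxx u : dist e u u = 0.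
Proof. by apply/eqP; rewrite -leqn0 dist_le_walk //; apply: walk0. Qed.

Lemma dist_edge u w : e u w -> dist e u w <= 1.
Proof. by move=> euw; apply: dist_le_walk (walkS euw (walk0 _ _)). Qed.

Hypothesis Ce : connected_graph e.

Lemma dist_walk u v : walk e (dist e u v) u v.
Proof.
have [n n_lt uv] := connect_walk (Ce u v).
have has_walk : has (fun n => walk_len e n u v) (iota 0 #|T|).
  by apply/hasP; exists n; [rewrite mem_iota | apply/walk_lenP].
have := nth_find 0 has_walk; rewrite has_find size_iota in has_walk.
by rewrite nth_iota // add0n => /walk_lenP.
Qed.

Lemma dist_eq0 u v : dist e u v = 0 -> u = v.
Proof. by move=> d0; have := dist_walk u v; rewrite d0 => uv; inversion uv. Qed.

Lemma dist_triangle u v w : dist e u w <= dist e u v + dist e v w.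
Proof. exact/dist_le_walk/walk_cat/dist_walk/dist_walk. Qed.

Lemma distC u v : dist e u v = dist e v u.
Proof.
apply/eqP; rewrite eqn_leq.
by apply/andP; split; apply/dist_le_walk/walk_rev/dist_walk.
Qed.

Lemma dist_neighbor_closer u v :
  u != v -> exists2 z, e u z & (dist e z v).+1 = dist e u v.
Proof.
move=> uv; have := dist_walk u v.
case duv: (dist e u v) => [|n] uv_walk; first by rewrite (dist_eq0 duv) eqxx in uv.
inversion uv_walk as [|n' x z y euz zv]; subst; exists z => //.
apply/eqP; rewrite eqn_leq ltnS dist_le_walk //= -duv.
by rewrite (leq_trans (dist_triangle _ z _)) // addnC -addn1 leq_add2l dist_edge.
Qed.

End Distance.

Lemma mutually_max_distantC (T : finType) (e : rel T) x y :
  mutually_max_distant e x y = mutually_max_distant e y x.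
Proof. by rewrite /mutually_max_distant eq_sym andbAC. Qed.

Section StrongResolving.
Variables (T : finType) (e : rel T).
Hypotheses (se : symmetric e) (Ce : connected_graph e).

Lemma in_interval_max_distant x y w :
  max_distant e y x -> in_interval e x w y -> w = y.
Proof.
move=> y_far /eqP xyw; apply/eqP; apply/negPn/negP; rewrite eq_sym => yw.
have [z eyz zw] := dist_neighbor_closer Ce yw.
have := forallP y_far z; rewrite eyz (distC se Ce y) /=.
by have := dist_triangle Ce x z w; lia.
Qed.

Lemma strongly_resolves_mutually_max_distant x y w :
  mutually_max_distant e x y -> strongly_resolves e w x y -> (w == x) || (w == y).
Proof.
case/andP=> /andP[_ x_far] y_far /orP[] /in_interval_max_distant -> //.
  by rewrite eqxx orbT.
by rewrite eqxx.
Qed.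

Lemma max_distant_beyond u v :
  exists2 x, in_interval e u x v & max_distant e x u.
Proof.
pose beyond := [pred x | in_interval e u x v].
have beyond_v : beyond v by rewrite inE /in_interval distxx addn0.
have [x /eqP uvx x_max] := arg_maxnP (dist e u) beyond_v.
exists x; first exact/eqP.
apply/forallP => w; apply/implyP => exw; rewrite (distC se Ce x u) leqNgt.
apply/negP => w_farther; move: (dist_triangle Ce v x w) (dist_edge exw).
have := dist_triangle Ce u v w; rewrite (distC se Ce x w) => uvw vxw xw.
have /x_max : beyond w by rewrite inE /in_interval; apply/eqP; lia.
lia.
Qed.

Lemma max_distant_through u x y :
  in_interval e x y u -> max_distant e x u -> max_distant e x y.
Proof.
move=> /eqP xuy /forallP x_far; apply/forallP => w; apply/implyP => exw.
have := dist_triangle Ce y u w; have := dist_edge exw.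
have := dist_triangle Ce u x w; have := x_far w; rewrite exw.
by rewrite !(distC se Ce _ x) (distC se Ce y u); lia.
Qed.

Lemma in_interval_xx x u : in_interval e x x u -> u = x.
Proof. by rewrite /in_interval distxx addn_eq0 => /andP[_ /eqP/(dist_eq0 Ce)]. Qed.

Lemma strong_resolving_setP (S : {set T}) :
  reflect (forall x y, mutually_max_distant e x y -> (x \in S) || (y \in S))
          (strong_resolving_set e S).
Proof.
apply: (iffP idP) => [srs x y xy_mmd | cover].
  have xy : x != y by case/andP: xy_mmd => /andP[].
  have /existsP[w /andP[wS]] := implyP (forallP (forallP srs x) y) xy.
  move/(strongly_resolves_mutually_max_distant xy_mmd).
  by case/orP=> /eqP <-; rewrite wS ?orbT.
apply/forallP => u; apply/forallP => v; apply/implyP => uv.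
have [x uvx x_far] := max_distant_beyond u v.
have [y xuy y_far] := max_distant_beyond x u.
have xy_mmd : mutually_max_distant e x y.
  rewrite /mutually_max_distant y_far (max_distant_through xuy x_far) !andbT.
  apply: contraNneq uv => xy; subst y; have ux := in_interval_xx xuy; subst x.
  by rewrite (in_interval_xx uvx).
have vuy : in_interval e v y u.
  move: (eqP uvx) (eqP xuy) (dist_triangle Ce v u y) (dist_triangle Ce x v y).
  move: (distC se Ce u v) (distC se Ce x u) (distC se Ce x v).
  by rewrite /in_interval; lia.
case/orP: (cover x y xy_mmd) => [xS | yS]; apply/existsP.
  by exists x; rewrite xS /strongly_resolves uvx.
by exists y; rewrite yS /strongly_resolves vuy orbT.
Qed.

End StrongResolving.

Lemma geq_bigmin_seq (I : eqType) (r : seq I) (P : pred I) (F : I -> nat) d j :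
  j \in r -> P j -> \big[minn/d]_(i <- r | P i) F i <= F j.
Proof.
elim: r => // i r IH; rewrite inE big_cons => /orP[/eqP<- -> | jr Pj].
  exact: geq_minl.
by case: (P i); rewrite ?geq_min IH ?orbT.
Qed.

Section StrongMetricDimension.
Variables (T : finType) (e : rel T).

Lemma strong_resolving_setT : strong_resolving_set e setT.
Proof.
apply/forallP => u; apply/forallP => v; apply/implyP => _; apply/existsP.
by exists u; rewrite inE /strongly_resolves /in_interval distxx addn0 eqxx orbT.
Qed.

Lemma sdim_leq_card S : strong_resolving_set e S -> sdim e <= #|S|.
Proof. by move=> srs; rewrite geq_bigmin_seq ?mem_index_enum. Qed.

Lemma leq_sdim n : (forall S, strong_resolving_set e S -> n <= #|S|) -> n <= sdim e.
Proof.
move=> le_n; apply: (big_ind (leq n)) => [|a b|S]; last exact: le_n.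
  by rewrite -cardsT le_n ?strong_resolving_setT.
by rewrite leq_min => -> ->.
Qed.

End StrongMetricDimension.

Section CartesianProduct.
Variables (T U : finType) (e : rel T) (f : rel U).

Lemma cart_sym : symmetric e -> symmetric f -> symmetric (cart_rel e f).
Proof.
by move=> se sf [a x] [c y]; rewrite /cart_rel /= se sf (eq_sym a) (eq_sym x).
Qed.

Lemma walk_cartl n a c x : walk e n a c -> walk (cart_rel e f) n (a, x) (c, x).
Proof.
elim=> [b|k b w d ebw _]; first exact: walk0.
by apply: walkS; rewrite /cart_rel /= eqxx ebw orbT.
Qed.

Lemma walk_cartr n x y a : walk f n x y -> walk (cart_rel e f) n (a, x) (a, y).
Proof.
elim=> [b|k b w d fbw _]; first exact: walk0.
by apply: walkS; rewrite /cart_rel /= eqxx fbw.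
Qed.

Lemma walk_cart_split n p q : walk (cart_rel e f) n p q ->
  exists n1 n2, [/\ n = n1 + n2, walk e n1 p.1 q.1 & walk f n2 p.2 q.2].
Proof.
elim=> [p0|k p0 w q0 pw _ [n1 [n2 [-> wq1 wq2]]]].
  by exists 0, 0; split => //; apply: walk0.
case/orP: pw => /andP[/eqP eq_pw pw].
  by exists n1, n2.+1; rewrite addnS eq_pw; split => //; apply: walkS pw wq2.
by exists n1.+1, n2; rewrite eq_pw; split => //; apply: walkS pw wq1.
Qed.

Hypotheses (Ce : connected_graph e) (Cf : connected_graph f).

Lemma walk_cart a x c y :
  walk (cart_rel e f) (dist e a c + dist f x y) (a, x) (c, y).
Proof. by apply: walk_cat; [apply/walk_cartl/dist_walk | apply/walk_cartr/dist_walk]. Qed.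

Lemma cart_connected : connected_graph (cart_rel e f).
Proof. by move=> [a x] [c y]; apply: walk_connect (walk_cart a x c y). Qed.

Lemma dist_cart a x c y :
  dist (cart_rel e f) (a, x) (c, y) = dist e a c + dist f x y.
Proof.
apply/eqP; rewrite eqn_leq (dist_le_walk (walk_cart a x c y)) /=.
have [n1 [n2 [-> /dist_le_walk le_ac /dist_le_walk le_xy]]] :=
  walk_cart_split (dist_walk cart_connected (a, x) (c, y)).
exact: leq_add.
Qed.

Hypotheses (se : symmetric e) (sf : symmetric f).

Lemma max_distant_cart a x c y :
  max_distant (cart_rel e f) (a, x) (c, y) =
  max_distant e a c && max_distant f x y.
Proof.
apply/forallP/andP => [far | [/forallP far_ac /forallP far_xy] [b w]].
  split; apply/forallP => w; apply/implyP => ew.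
    have := far (w, x); rewrite /cart_rel /= eqxx ew orbT /= !dist_cart.
    by rewrite (distC sf Cf y); lia.
  have := far (a, w); rewrite /cart_rel /= eqxx ew /= !dist_cart.
  by rewrite (distC se Ce c); lia.
rewrite /cart_rel /= !dist_cart; apply/implyP => /orP[] /andP[/eqP <- ew].
  by have := far_xy w; rewrite ew (distC se Ce c) /=; lia.
by have := far_ac b; rewrite ew (distC sf Cf y) /=; lia.
Qed.

Lemma mutually_max_distant_cart a c x y :
  max_distant e a c -> max_distant e c a -> mutually_max_distant f x y ->
  mutually_max_distant (cart_rel e f) (a, x) (c, y).
Proof.
move=> far_ac far_ca /andP[/andP[xy far_xy] far_yx].
rewrite /mutually_max_distant !max_distant_cart far_ac far_ca far_xy far_yx.
by rewrite xpair_eqE (negbTE xy) andbF.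
Qed.

End CartesianProduct.

Lemma K2_sym : symmetric K2_rel.
Proof. by move=> b b'; rewrite /K2_rel eq_sym. Qed.

Lemma K2_connected : connected_graph K2_rel.
Proof.
by move=> b b'; have [->|bb'] := eqVneq b b'; [apply: connect0 | apply: connect1].
Qed.

Lemma dist_K2 b b' : dist K2_rel b b' = (b != b').
Proof.
have [->|bb'] := eqVneq b b'; first exact: distxx.
apply/eqP; rewrite eqn_leq dist_edge //= lt0n.
by apply: contra_neq bb' => /(dist_eq0 K2_connected).
Qed.

Lemma max_distant_K2 b b' : max_distant K2_rel b b' = (b != b').
Proof.
apply/forallP/idP => [/(_ (~~ b)) | bb' w]; rewrite /K2_rel !dist_K2.
  by case: b b' => [] [].
by rewrite bb'; apply/implyP => _; apply: leq_b1.
Qed.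

Lemma mutually_max_distant_cartK2 (T : finType) (e : rel T) a b c b' :
  symmetric e -> connected_graph e ->
  mutually_max_distant (cart_rel e K2_rel) (a, b) (c, b') =
  [&& b != b', max_distant e a c & max_distant e c a].
Proof.
move=> se Ce; rewrite /mutually_max_distant.
rewrite !(max_distant_cart Ce K2_connected se K2_sym) !max_distant_K2.
have [<-|bb'] := eqVneq b b'; first by rewrite !andbF.
have -> : (a, b) != (c, b') by rewrite xpair_eqE negb_and bb' orbT.
by rewrite !andbT.
Qed.

Lemma is_matching_edge (V : finType) (r : rel V) M E :
  is_matching r M -> E \in M -> exists x y, r x y /\ E = [set x; y].
Proof.
case/andP=> /forallP/(_ E) + _ EM; rewrite EM /=.
by case/existsP => x /existsP[y /andP[rxy /eqP ->]]; exists x, y.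
Qed.

Lemma matching_number_attained (V : finType) (r : rel V) :
  exists2 M, is_matching r M & matching_number r = #|M|.
Proof.
have matching0 : is_matching r set0.
  apply/andP; split; first by apply/forallP => E; rewrite inE.
  by apply/trivIsetP => A B; rewrite inE.
rewrite /matching_number (bigmax_eq_arg _ matching0).
by case: arg_maxnP => // M; exists M.
Qed.

Lemma leq_sum_card_disjoint (I X : finType) (P : pred I) (B : I -> {set X})
    (S : {set X}) :
  (forall i, P i -> B i \subset S) ->
  (forall i j, P i -> P j -> i != j -> [disjoint B i & B j]) ->
  \sum_(i | P i) #|B i| <= #|S|.
Proof.
move=> sub_BS disjB.
have cardB i : P i -> #|B i| = \sum_(x in S) (x \in B i).
  move/sub_BS/subsetP=> sub_i; rewrite -sum1_card big_mkcond [RHS]big_mkcond /=.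
  by apply: eq_bigr => x _; case: (boolP (x \in B i)) => [/sub_i -> | _]; case: (x \in S).
rewrite (eq_bigr _ cardB) exchange_big -sum1_card leq_sum // => x _.
have [j /andP[Pj xBj] | no_block] := pickP [pred i | P i && (x \in B i)].
  rewrite (bigD1 j) //= xBj big1 // => i /andP[Pi ij].
  by rewrite (disjointFr (disjB j i Pj Pi _) xBj) // eq_sym.
by rewrite big1 // => i Pi; have := no_block i; rewrite /= Pi /= => ->.
Qed.

Lemma sum_card_fibres_trivIset (V Y X : finType) (h : V -> Y) (g : X -> Y)
    (M : {set {set V}}) (S : {set X}) :
  injective h -> trivIset M -> \sum_(E in M) #|S :&: g @^-1: (h @: E)| <= #|S|.
Proof.
move=> inj_h /trivIsetP tiM; apply: leq_sum_card_disjoint => [E _ | E E' EM E'M EE'].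
  exact: subsetIl.
rewrite -setI_eq0; apply/eqP/setP => p; rewrite !inE.
apply/negP => /andP[/andP[_ /imsetP[z zE ->]] /andP[_ /imsetP[z' z'E /inj_h eq_z]]].
by rewrite eq_z (disjointFl (tiM _ _ EM E'M EE') z'E) in zE.
Qed.

Section StrongDimensionCartesian.
Variables (T U : finType) (e : rel T) (f : rel U).
Hypotheses (se : symmetric e) (Ce : connected_graph e).
Hypotheses (sf : symmetric f) (Cf : connected_graph f).

Lemma leq_mu_SR_sdim_cartK2 : 2 * mu_SR e <= sdim (cart_rel e K2_rel).
Proof.
have [seK CeK] := (cart_sym se K2_sym, cart_connected Ce K2_connected).
apply: leq_sdim => S /(strong_resolving_setP seK CeK) cover.
rewrite /mu_SR; have [M matchM ->] := matching_number_attained (@sr_rel T e).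
apply: leq_trans (sum_card_fibres_trivIset fst S val_inj (proj2 (andP matchM))).
rewrite mulnC -sum_nat_const leq_sum // => E /(is_matching_edge matchM)[x [y [xy ->]]].
have inB z b : z \in [set x; y] -> (val z, b) \in S ->
    (val z, b) \in S :&: fst @^-1: (val @: [set x; y]).
  by move=> zE zbS; rewrite !inE /= zbS imset_f.
have [x_y [xE yE]] : val x != val y /\ x \in [set x; y] /\ y \in [set x; y].
  by case/andP: xy => /andP[]; rewrite !inE !eqxx orbT.
have /andP[/andP[_ far_xy] far_yx] := xy.
have := cover (val y, false) (val x, true); have := cover (val x, false) (val y, true).
rewrite !mutually_max_distant_cartK2 // far_xy far_yx.
move=> /(_ isT) /orP[p | p] /(_ isT) /orP[q | q]; apply/card_gt1P.
- exists (val x, false), (val y, false); split; [exact: inB xE p | exact: inB yE q |].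
  by apply: contra_neq x_y => -[].
- exists (val x, false), (val x, true); split; [exact: inB xE p | exact: inB xE q |].
  by apply/eqP; case.
- exists (val y, true), (val y, false); split; [exact: inB yE p | exact: inB yE q |].
  by apply/eqP; case.
- exists (val y, true), (val x, true); split; [exact: inB yE p | exact: inB xE q |].
  by apply: contra_neq x_y => -[/esym].
Qed.

Lemma leq_mu_SR_sdim_cart : mu_SR f * sdim (cart_rel e K2_rel) <= sdim (cart_rel e f).
Proof.
have [seH CeH] := (cart_sym se sf, cart_connected Ce Cf).
apply: leq_sdim => S /(strong_resolving_setP seH CeH) cover.
rewrite /mu_SR; have [M matchM ->] := matching_number_attained (@sr_rel U f).
apply: leq_trans (sum_card_fibres_trivIset snd S val_inj (proj2 (andP matchM))).
rewrite -sum_nat_const leq_sum // => E /(is_matching_edge matchM)[x [y [xy ->]]].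
set B := S :&: _.
have x_y : val x != val y by case/andP: xy => /andP[].
pose of_K2 (b : bool) := if b then val y else val x.
pose to_K2 (p : T * U) := (p.1, p.2 != val x).
have of_K2K p : p \in B -> of_K2 (p.2 != val x) = p.2.
  rewrite !inE => /andP[_ /imsetP[z]]; rewrite !inE => /orP[] /eqP-> ->.
    by rewrite /of_K2 /= eqxx.
  by rewrite /of_K2 /= eq_sym x_y.
have to_K2K a b : to_K2 (a, of_K2 b) = (a, b).
  by case: b; rewrite /to_K2 /of_K2 /= ?eqxx // eq_sym x_y.
have to_K2_inj : {in B &, injective to_K2}.
  move=> [a u] [c w] /of_K2K uB /of_K2K wB [-> eq_uw].
  by rewrite -[u]uB -[w]wB /= eq_uw.
rewrite -(card_in_imset to_K2_inj); apply: sdim_leq_card.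
apply/(strong_resolving_setP (cart_sym se K2_sym) (cart_connected Ce K2_connected)).
move=> [a b] [c b']; rewrite mutually_max_distant_cartK2 // => /and3P[bb' far_ac far_ca].
have of_K2_mmd : mutually_max_distant f (of_K2 b) (of_K2 b').
  by case: b b' bb' => [] [] //= _; rewrite mutually_max_distantC.
have in_to_K2 a0 b0 : (a0, of_K2 b0) \in S -> (a0, b0) \in to_K2 @: B.
  move=> S_a0; rewrite -to_K2K; apply: imset_f; rewrite !inE /= S_a0 /=.
  by rewrite /of_K2; case: (b0); apply: imset_f; rewrite !inE eqxx ?orbT.
have := cover _ _ (mutually_max_distant_cart Ce Cf se sf far_ac far_ca of_K2_mmd).
by case/orP=> /in_to_K2 ->; rewrite ?orbT.
Qed.
End StrongDimensionCartesian.

Theorem theorem19 (T U : finType) (e : rel T) (f : rel U) :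
  simple_graph e -> connected_graph e ->
  simple_graph f -> connected_graph f ->
  mu_SR f * sdim (cart_rel e K2_rel) <= sdim (cart_rel e f) /\
  2 * mu_SR e * mu_SR f <= mu_SR f * sdim (cart_rel e K2_rel).
Proof.
move=> [se _] Ce [sf _] Cf; split; first exact: leq_mu_SR_sdim_cart.
by rewrite mulnC leq_mul2l leq_mu_SR_sdim_cartK2 ?orbT.
Qed.
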